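(* Let $a\ge0$, $r>0$, $\beta\in\mathbb{R}$, $\theta\in(0,\frac\pi2)$ and $\lambda\in\overline{\Sigma_{\theta,r}}$. If either $\theta\in(\theta_0,\frac\pi2)$ with $\tan\theta_0\ge\frac{|\beta|}{\sqrt2}$, or ${\rm Re}\,\lambda>-\frac a2$, then $z_j(\lambda)\notin\mathbb{R}_-$ for $j=1,2$.
   Context: $\mathbb{R}_-=(-\infty,0)$. $\Sigma_{\theta,r}=\{z\in\mathbb{C}\setminus\{0\}:|\arg z|<\pi-\theta,|z|>r\}$, $\overline{\Sigma_{\theta,r}}$ its closure. $z_{1,2}(\lambda)$ are the two roots $z$ of $(\lambda-z)(\lambda+a-z)+\frac{\beta^2}{2}(z^2-az)=0$, i.e. $z_{1,2}=\frac{2\lambda+a(1+\beta^2/2)\pm\sqrt{a^2(1+\beta^2/2)^2-2\lambda^2\beta^2}}{2(1+\beta^2/2)}$. *)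

From Stdlib Require Import Reals.
From Coquelicot Require Import Coquelicot.
Open Scope R_scope.

Definition is_arg (z : C) (phi : R) : Prop :=
  - PI < phi <= PI /\ z = (Cmod z * cos phi, Cmod z * sin phi).

Definition Sigma (theta r : R) (z : C) : Prop :=
  z <> RtoC 0 /\
  (exists phi, is_arg z phi /\ Rabs phi < PI - theta) /\
  r < Cmod z.

Definition closureC (S : C -> Prop) (l : C) : Prop :=
  forall eps : R, 0 < eps -> exists w, S w /\ Cmod (Cminus w l) < eps.

Definition is_root_z (a beta : R) (lam z : C) : Prop :=
  Cplus (Cmult (Cminus lam z) (Cminus (Cplus lam (RtoC a)) z))
        (Cmult (RtoC (beta ^ 2 / 2)) (Cminus (Cmult z z) (Cmult (RtoC a) z)))
  = RtoC 0.

Definition in_Rminus (z : C) : Prop := Im z = 0 /\ Re z < 0.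

(** Every point of the closed sector |arg w| <= pi - theta satisfies the linear
    inequality Re w sin theta + |Im w| cos theta >= 0.  A negative real root x
    of the quadratic forces, by its imaginary part, either Im lam = 0, and then
    its real part forces Re lam < 0; or Re lam = x - a/2 < -a/2, and then its
    real part gives |Im lam| <= (|beta|/sqrt 2) |Re lam|.  When
    |beta|/sqrt 2 < tan theta, both possibilities put lam strictly outside the
    closed sector. *)
From Stdlib Require Import Reals Lra Psatz.
From Coquelicot Require Import Coquelicot.
Open Scope R_scope.

Definition sector_margin (theta : R) (w : C) : R :=
  Re w * sin theta + Rabs (Im w) * cos theta.

Lemma sector_margin_polar (theta rho phi : R) :
  0 <= rho -> - PI <= phi <= PI ->
  sector_margin theta (rho * cos phi, rho * sin phi) = rho * sin (Rabs phi + theta).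
Proof.
  intros Hrho Hphi_bound; unfold sector_margin; simpl.
  rewrite Rabs_mult, (Rabs_pos_eq rho Hrho), sin_plus.
  destruct (Rle_lt_dec 0 phi) as [Hphi | Hphi].
  - rewrite (Rabs_pos_eq phi Hphi), Rabs_pos_eq by (apply sin_ge_0; lra).
    ring.
  - rewrite (Rabs_left phi Hphi), Rabs_left1, sin_neg, cos_neg.
    + ring.
    + rewrite <- (Ropp_involutive phi), sin_neg.
      assert (0 <= sin (- phi)) by (apply sin_ge_0; lra); lra.
Qed.

Lemma Sigma_sector_margin_gt0 (theta r : R) (w : C) :
  0 < theta -> Sigma theta r w -> 0 < sector_margin theta w.
Proof.
  intros Htheta [Hw0 [[phi [[Hphi_bound Hpolar] Hphi]] _]].
  apply Cmod_gt_0 in Hw0.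
  rewrite Hpolar, sector_margin_polar by (pose proof (Cmod_ge_0 w); lra).
  apply Rmult_lt_0_compat; [exact Hw0 |].
  pose proof (Rabs_pos phi).
  apply sin_gt_0; lra.
Qed.

Lemma sector_margin_le (theta : R) (w l : C) :
  sector_margin theta w <= sector_margin theta l + 2 * Cmod (Cminus w l).
Proof.
  unfold sector_margin.
  pose proof (Rmax_Cmod (Cminus w l)) as Hmax.
  destruct w as [w1 w2], l as [l1 l2]; simpl in *.
  assert (Hre : Rabs (w1 - l1) <= Cmod (w1 + - l1, w2 + - l2))
    by (eapply Rle_trans; [apply Rmax_l | exact Hmax]).
  assert (Him : Rabs (w2 - l2) <= Cmod (w1 + - l1, w2 + - l2))
    by (eapply Rle_trans; [apply Rmax_r | exact Hmax]).
  set (m := Cmod _) in *.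
  assert (Hsin : (w1 - l1) * sin theta <= m).
  { pose proof (SIN_bound theta) as Hbound; apply Rabs_le in Hbound.
    pose proof (Rabs_pos (w1 - l1)).
    eapply Rle_trans; [apply Rle_abs |]; rewrite Rabs_mult; nra. }
  assert (Hcos : (Rabs w2 - Rabs l2) * cos theta <= m).
  { pose proof (COS_bound theta) as Hbound; apply Rabs_le in Hbound.
    pose proof (Rabs_triang_inv2 w2 l2); pose proof (Rabs_pos (Rabs w2 - Rabs l2)).
    eapply Rle_trans; [apply Rle_abs |]; rewrite Rabs_mult; nra. }
  lra.
Qed.

Lemma closureC_Sigma_sector_margin_ge0 (theta r : R) (l : C) :
  0 < theta -> closureC (Sigma theta r) l -> 0 <= sector_margin theta l.
Proof.
  intros Htheta Hcl.
  apply Rnot_lt_le; intros Hneg.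
  destruct (Hcl (- sector_margin theta l / 2)) as [w [Hw Hdist]]; [lra |].
  pose proof (Sigma_sector_margin_gt0 theta r w Htheta Hw).
  pose proof (sector_margin_le theta w l).
  lra.
Qed.

Lemma sector_margin_lt0 (theta B : R) (w : C) :
  0 < theta < PI / 2 -> 0 <= B < tan theta ->
  Re w < 0 -> Im w ^ 2 <= B ^ 2 * Re w ^ 2 ->
  sector_margin theta w < 0.
Proof.
  intros Htheta [HB0 HBtan] Hre Him; unfold sector_margin.
  assert (Hcos : 0 < cos theta) by (apply cos_gt_0; lra).
  assert (HBcos : B * cos theta < sin theta).
  { unfold tan in HBtan.
    apply (Rmult_lt_compat_r (cos theta)) in HBtan; [| exact Hcos].
    unfold Rdiv in HBtan; rewrite Rmult_assoc, Rinv_l in HBtan; lra. }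
  assert (Habs : Rabs (Im w) <= - B * Re w).
  { apply Rsqr_incr_0_var; [| nra].
    unfold Rsqr; rewrite <- Rabs_mult, Rabs_pos_eq; nra. }
  nra.
Qed.

Lemma is_root_z_real (a beta : R) (lam : C) (x : R) :
  is_root_z a beta lam (RtoC x) ->
  (Re lam - x) * (Re lam - x + a) - Im lam ^ 2 + beta ^ 2 / 2 * (x ^ 2 - a * x) = 0
  /\ Im lam * (2 * (Re lam - x) + a) = 0.
Proof.
  destruct lam as [p q]; unfold is_root_z; intros Hroot.
  assert (Hre := f_equal fst Hroot); assert (Him := f_equal snd Hroot).
  simpl in *; split; lra.
Qed.

Lemma negative_real_root_cases (a beta : R) (lam : C) (x : R) :
  0 <= a -> x < 0 -> is_root_z a beta lam (RtoC x) ->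
  (Im lam = 0 /\ Re lam < 0)
  \/ (Re lam < - a / 2 /\ Im lam ^ 2 <= beta ^ 2 / 2 * Re lam ^ 2).
Proof.
  intros Ha Hx Hroot.
  destruct (is_root_z_real a beta lam x Hroot) as [Hre Him].
  assert (Hk : 0 <= beta ^ 2 / 2) by nra.
  destruct (Rmult_integral _ _ Him) as [Hq | Hp].
  - left; split; [exact Hq |].
    rewrite Hq in Hre.
    apply Rnot_le_lt; intros Hp.
    assert (0 <= beta ^ 2 / 2 * (x ^ 2 - a * x)) by (apply Rmult_le_pos; nra).
    nra.
  - right; split; [lra |].
    replace (Re lam) with (x - a / 2) in * by lra.
    nra.
Qed.

Lemma sqr_Rabs_div_sqrt2 (beta : R) : (Rabs beta / sqrt 2) ^ 2 = beta ^ 2 / 2.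
Proof.
  assert (Hsqrt : 0 < sqrt 2) by (apply sqrt_lt_R0; lra).
  unfold Rdiv; rewrite Rpow_mult_distr, pow2_abs, pow_inv, pow2_sqrt by lra.
  reflexivity.
Qed.

Theorem lemma3p12 (a r beta theta : R) (lam : C) :
  0 <= a -> 0 < r -> 0 < theta < PI / 2 ->
  closureC (Sigma theta r) lam ->
  ((exists theta0 : R, 0 <= theta0 < theta /\ Rabs beta / sqrt 2 <= tan theta0)
   \/ - a / 2 < Re lam) ->
  forall z : C, is_root_z a beta lam z -> ~ in_Rminus z.
Proof.
  intros Ha _ Htheta Hcl Hcase [x y] Hroot [Hy Hx]; simpl in Hy, Hx; subst y.
  pose proof (closureC_Sigma_sector_margin_ge0 theta r lam ltac:(lra) Hcl) as Hmargin.
  apply (Rle_not_lt _ _ Hmargin).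
  assert (Htan0 : 0 < tan theta) by (apply tan_gt_0; lra).
  destruct (negative_real_root_cases a beta lam x Ha Hx Hroot)
    as [[Hq Hp] | [Hp Hq]].
  - apply (sector_margin_lt0 theta 0); [lra | lra | exact Hp | rewrite Hq; nra].
  - destruct Hcase as [[theta0 [Htheta0 Hbeta]] | Hre]; [| lra].
    assert (tan theta0 < tan theta) by (apply tan_increasing; lra).
    apply (sector_margin_lt0 theta (Rabs beta / sqrt 2)).
    + exact Htheta.
    + split; [| lra].
      apply Rdiv_le_0_compat; [apply Rabs_pos | apply sqrt_lt_R0; lra].
    + lra.
    + rewrite sqr_Rabs_div_sqrt2; exact Hq.
Qed.
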